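(* Let $\kappa_0=(\xi_0,\eta_0),\kappa_1=(\xi_1,\eta_1)\in S\mathbb{H}$. Then $\phi_1(\kappa_0)=\phi_1(\kappa_1)$ if and only if $\kappa_0=\kappa_1\alpha$ for some $\alpha\in\mathbb{H}$ with $|\alpha|=1$.
   Context: For $q=a+bi+cj+dk\in\mathbb{H}$, $\bar q=a-bi-cj-dk$. $\mathcal{V}=\mathrm{span}_\mathbb{R}\{1,i,j\}$. $S\mathbb{H}=\{(\xi,\eta)\in\mathbb{H}^2\setminus\{(0,0)\}:\xi\bar\eta\in\mathcal{V}\}$; $(\xi,\eta)\alpha=(\xi\alpha,\eta\alpha)$. The map $\phi_1$ sends $\kappa$ (a column) to the $2\times2$ quaternionic matrix $\kappa\bar\kappa^T=\begin{pmatrix}|\xi|^2&\xi\bar\eta\\ \eta\bar\xi&|\eta|^2\end{pmatrix}$. *)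

(* Real quaternions H = R^4 over a real closed field R
   (e.g. the reals), with the Hamilton product. *)
From HB Require Import structures.
From mathcomp Require Import all_boot all_order all_algebra.
Set Implicit Arguments. Unset Strict Implicit. Unset Printing Implicit Defensive.
Import Order.TTheory GRing.Theory Num.Theory.
Local Open Scope ring_scope.

(* q = a + b i + c j + d k *)
Record quat (R : rcfType) := Quat { qa : R; qb : R; qc : R; qd : R }.

Section Quat.
Variable R : rcfType.

Definition qzero : quat R := Quat 0 0 0 0.

Definition qmul (p q : quat R) : quat R :=
  Quat (qa p * qa q - qb p * qb q - qc p * qc q - qd p * qd q)
       (qa p * qb q + qb p * qa q + qc p * qd q - qd p * qc q)
       (qa p * qc q - qb p * qd q + qc p * qa q + qd p * qb q)
       (qa p * qd q + qb p * qc q - qc p * qb q + qd p * qa q).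

Definition qconj (q : quat R) : quat R := Quat (qa q) (- qb q) (- qc q) (- qd q).

Definition qnorm (q : quat R) : R :=
  Num.sqrt (qa q ^+ 2 + qb q ^+ 2 + qc q ^+ 2 + qd q ^+ 2).

Definition inV (q : quat R) : Prop := qd q = 0.

Definition SH (kappa : quat R * quat R) : Prop :=
  kappa <> (qzero, qzero) /\ inV (qmul kappa.1 (qconj kappa.2)).

Definition ract (kappa : quat R * quat R) (alpha : quat R) : quat R * quat R :=
  (qmul kappa.1 alpha, qmul kappa.2 alpha).

Definition kcol (kappa : quat R * quat R) (i : 'I_2) : quat R :=
  if val i == 0%N then kappa.1 else kappa.2.

Definition phi1 (kappa : quat R * quat R) : 'M[quat R]_(2, 2) :=
  \matrix_(i < 2, j < 2) qmul (kcol kappa i) (qconj (kcol kappa j)).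

End Quat.

(* Write κ = (ξ, η).  The entries ξ ξ̄ = |ξ|² and η ξ̄ of φ₁(κ) already determine κ
   up to a unit on the right when ξ ≠ 0: if they agree for κ₀ and κ₁, then
   α := ξ̄₁ ξ₀ / |ξ₁|² has |α| = |ξ₀| / |ξ₁| = 1, ξ₁ α = ξ₀, and
   η₁ α = (η₁ ξ̄₁) ξ₀ / |ξ₁|² = (η₀ ξ̄₀) ξ₀ / |ξ₀|² = η₀.  If ξ₁ = 0 then η₁ ≠ 0 and
   the same argument runs with the roles of ξ and η exchanged.  Conversely
   α ᾱ = 1 gives (κ α)(κ α)* = κ κ*. *)
From mathcomp Require Import all_boot all_order all_algebra.
From mathcomp Require Import ring lra.
Set Implicit Arguments. Unset Strict Implicit. Unset Printing Implicit Defensive.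
Import Order.TTheory GRing.Theory Num.Theory.
Local Open Scope ring_scope.

Section Quaternions.
Variable R : rcfType.
Implicit Types (p q r : quat R) (c d : R).

Definition qreal c : quat R := Quat c 0 0 0.

Definition qnorm2 p : R := qa p ^+ 2 + qb p ^+ 2 + qc p ^+ 2 + qd p ^+ 2.

Lemma quat_ext p q :
  qa p = qa q -> qb p = qb q -> qc p = qc q -> qd p = qd q -> p = q.
Proof. by case: p; case: q => /= ? ? ? ? ? ? ? ? -> -> -> ->. Qed.

Ltac quat_ring := apply: quat_ext; rewrite /qmul /qconj /qreal /qnorm2 /=; ring.

Lemma qmulA p q r : qmul p (qmul q r) = qmul (qmul p q) r.
Proof. quat_ring. Qed.

Lemma qconjM p q : qconj (qmul p q) = qmul (qconj q) (qconj p).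
Proof. quat_ring. Qed.

Lemma qmul_conjr p : qmul p (qconj p) = qreal (qnorm2 p).
Proof. quat_ring. Qed.

Lemma qmul_conjl p : qmul (qconj p) p = qreal (qnorm2 p).
Proof. quat_ring. Qed.

Lemma qmul1 p : qmul (qreal 1) p = p.
Proof. quat_ring. Qed.

Lemma qmul_realC c p : qmul (qreal c) p = qmul p (qreal c).
Proof. quat_ring. Qed.

Lemma qmul_realCA c p q : qmul p (qmul (qreal c) q) = qmul (qreal c) (qmul p q).
Proof. quat_ring. Qed.

Lemma qmul_realM c d : qmul (qreal c) (qreal d) = qreal (c * d).
Proof. quat_ring. Qed.

Lemma qnorm2M p q : qnorm2 (qmul p q) = qnorm2 p * qnorm2 q.
Proof. rewrite /qnorm2 /=; ring. Qed.

Lemma qnorm2_conj p : qnorm2 (qconj p) = qnorm2 p.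
Proof. rewrite /qnorm2 /=; ring. Qed.

Lemma qnorm2_real c : qnorm2 (qreal c) = c ^+ 2.
Proof. rewrite /qnorm2 /=; ring. Qed.

Lemma qnorm2_ge0 p : 0 <= qnorm2 p.
Proof. by rewrite /qnorm2 !addr_ge0 ?sqr_ge0. Qed.

Lemma qnorm2_eq0 p : qnorm2 p = 0 -> p = qzero R.
Proof.
rewrite /qnorm2 => p0.
have sqr_eq0 (x : R) : x ^+ 2 = 0 -> x = 0 by move/eqP; rewrite sqrf_eq0 => /eqP.
by apply: quat_ext; apply: sqr_eq0 => /=; nra.
Qed.

Lemma qnorm_eq1 p : (qnorm p = 1) <-> (qnorm2 p = 1).
Proof.
rewrite /qnorm -/(qnorm2 p); split=> [n1 | ->]; last exact: sqrtr1.
by rewrite -(sqr_sqrtr (qnorm2_ge0 p)) n1 expr1n.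
Qed.

Lemma qmul_conj_unitr a p q : qnorm2 a = 1 ->
  qmul (qmul p a) (qconj (qmul q a)) = qmul p (qconj q).
Proof.
by move=> a1; rewrite qconjM -!qmulA [qmul a _]qmulA qmul_conjr a1 qmul1.
Qed.

Lemma unit_ract_of_mul_conj x0 y0 x1 y1 : qnorm2 x1 != 0 ->
  qmul x0 (qconj x0) = qmul x1 (qconj x1) ->
  qmul y0 (qconj x0) = qmul y1 (qconj x1) ->
  exists2 a, qnorm2 a = 1 & x0 = qmul x1 a /\ y0 = qmul y1 a.
Proof.
move=> n1_neq0; rewrite !qmul_conjr => -[n01] yx01.
set a := qmul (qreal (qnorm2 x1)^-1) (qmul (qconj x1) x0).
exists a; last split.
- by rewrite /a !qnorm2M qnorm2_conj qnorm2_real n01; field.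
- by rewrite /a qmul_realCA [qmul x1 _]qmulA qmul_conjr qmulA qmul_realM mulVf ?qmul1.
- rewrite /a qmul_realCA [qmul y1 _]qmulA -yx01 -qmulA qmul_conjl -qmul_realC qmulA.
  by rewrite qmul_realM n01 mulVf ?qmul1.
Qed.

Implicit Types kappa : quat R * quat R.

Lemma phi1_ract kappa a : qnorm2 a = 1 -> phi1 (ract kappa a) = phi1 kappa.
Proof.
move=> a1; apply/matrixP => i j; rewrite !mxE /kcol /=.
by case: (val i == 0%N); case: (val j == 0%N); rewrite qmul_conj_unitr.
Qed.

Lemma phi1_eq_ract kappa0 kappa1 :
  kappa1 <> (qzero R, qzero R) -> phi1 kappa0 = phi1 kappa1 ->
  exists2 a, qnorm2 a = 1 & kappa0 = ract kappa1 a.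
Proof.
case: kappa0 kappa1 => [x0 y0] [x1 y1] k1_neq0 phi01.
have entry i j := congr1 (fun M : 'M[quat R]_2 => M i j) phi01.
have := entry ord0 ord0; have := entry ord0 ord_max.
have := entry ord_max ord0; have := entry ord_max ord_max.
rewrite !mxE /kcol /= => yy01 yx01 xy01 xx01.
have [/qnorm2_eq0 x1_0 | n1_neq0] := eqVneq (qnorm2 x1) 0; last first.
  by have [a a1 [-> ->]] := unit_ract_of_mul_conj n1_neq0 xx01 yx01; exists a.
have ny1_neq0 : qnorm2 y1 != 0.
  by apply/eqP => /qnorm2_eq0 y1_0; apply: k1_neq0; rewrite x1_0 y1_0.
by have [a a1 [-> ->]] := unit_ract_of_mul_conj ny1_neq0 yy01 xy01; exists a.
Qed.

End Quaternions.

Theorem lemma4p4 (R : rcfType) (kappa0 kappa1 : quat R * quat R) :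
  SH kappa0 -> SH kappa1 ->
  (phi1 kappa0 = phi1 kappa1 <->
   exists alpha : quat R, qnorm alpha = 1 /\ kappa0 = ract kappa1 alpha).
Proof.
move=> _ [k1_neq0 _]; split.
- by case/(phi1_eq_ract k1_neq0) => a /(qnorm_eq1 a).2 a1 ->; exists a.
- by case=> a [/(qnorm_eq1 a).1 a1 ->]; exact: phi1_ract.
Qed.
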